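(* Let $R$ be a commutative ring, $S$ a multiplicative subset of $R$ and $\Phi:0\to M\xrightarrow{f}N\xrightarrow{g}L\to 0$ a $u$-$S$-exact sequence of $R$-modules. Then: (1) the class of $u$-$S$-coherent modules is closed under $u$-$S$-isomorphisms; (2) if $L$ is $u$-$S$-coherent, then $M$ is $u$-$S$-coherent if and only if $N$ is $u$-$S$-coherent; (3) any finite direct sum of $u$-$S$-coherent modules is $u$-$S$-coherent; (4) if $N$ is $u$-$S$-coherent and $M$ is $S$-finite, then $L$ is $u$-$S$-coherent.
   Context: A multiplicative subset $S$ contains $1$ and is closed under products. A sequence $A\xrightarrow{f}B\xrightarrow{g}C$ is $u$-$S$-exact at $B$ if there is $s\in S$ with $s\,\mathrm{Ker}(g)\subseteq\mathrm{Im}(f)$ and $s\,\mathrm{Im}(f)\subseteq\mathrm{Ker}(g)$; a sequence is $u$-$S$-exact if it is so at each inner term. A homomorphism $h$ is a $u$-$S$-isomorphism if there is $s\in S$ with $s\,\mathrm{Ker}(h)=s\,\mathrm{Coker}(h)=0$; closure under $u$-$S$-isomorphisms means: if $A$ is in the class and there is a $u$-$S$-isomorphism $A\to B$, then $B$ is in the class. $M$ is $S$-finite with respect to $s\in S$ if there is a finitely generated submodule $F\subseteq M$ with $sM\subseteq F$. $M$ is $u$-$S$-finitely presented with respect to $s$ if there is an exact sequence $0\to T_1\to F\to M\to T_2\to 0$ with $F$ finitely presented and $sT_1=sT_2=0$. $M$ is $u$-$S$-coherent if there is $s\in S$ such that $M$ is $S$-finite with respect to $s$ and every finitely generated submodule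 of $M$ is $u$-$S$-finitely presented with respect to $s$. *)

From HB Require Import structures.
From mathcomp Require Import all_boot all_order all_algebra.
Set Implicit Arguments. Unset Strict Implicit. Unset Printing Implicit Defensive.
Import GRing.Theory.
Local Open Scope ring_scope.

(* Modules over a commutative ring R are MathComp [lmodType R]; submodules of
   a module M are predicates [M -> Prop]; R-linear maps are [{linear A -> B}]. *)
Section UsDefs.
Variable R : comPzRingType.

Definition mult_subset (S : R -> Prop) :=
  S 1 /\ (forall a b, S a -> S b -> S (a * b)).

Definition generated_by (M : lmodType R) (l : seq M) (x : M) :=
  exists c : 'I_(size l) -> R, x = \sum_(i < size l) c i *: l`_i.

Definition fg_submodule (M : lmodType R) (P : M -> Prop) :=
  exists l : seq M, forall x, P x <-> generated_by l x.

Definition fin_presented (F : lmodType R) :=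
  exists (n : nat) (h : {linear 'rV[R]_n -> F}),
    (forall y, exists x, h x = y) /\ fg_submodule (fun x => h x = 0).

Definition u_S_exact_at (S : R -> Prop) (A B C : lmodType R)
  (f : A -> B) (g : B -> C) :=
  exists s, S s /\
    (forall y, g y = 0 -> exists x, f x = s *: y) /\
    (forall x, g (s *: f x) = 0).

Definition u_S_exact_short (S : R -> Prop) (M N L : lmodType R)
  (f : M -> N) (g : N -> L) :=
  (exists s, S s /\ forall x, f x = 0 -> s *: x = 0)
  /\ u_S_exact_at S f g
  /\ (exists s, S s /\ forall z, exists y, g y = s *: z).

Definition u_S_iso (S : R -> Prop) (A B : lmodType R) (h : A -> B) :=
  exists s, S s /\ (forall x, h x = 0 -> s *: x = 0) /\
                   (forall y, exists x, h x = s *: y).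

Definition S_finite_wrt (s : R) (M : lmodType R) :=
  exists F : M -> Prop, fg_submodule F /\ forall m, F (s *: m).

Definition S_finite (S : R -> Prop) (M : lmodType R) :=
  exists s, S s /\ S_finite_wrt s M.

(* The submodule P of M (viewed as a module) is u-S-finitely presented w.r.t. s:
   there is an exact sequence 0 -> T1 --a--> F --h--> P --b--> T2 -> 0
   with F finitely presented and s T1 = s T2 = 0.  The maps h, b are given as
   maps F -> M (with values in P) and M -> T2 (only its restriction to P matters). *)
Definition u_S_fp_sub_wrt (s : R) (M : lmodType R) (P : M -> Prop) :=
  exists (T1 F T2 : lmodType R) (a : {linear T1 -> F}) (h : {linear F -> M})
         (b : {linear M -> T2}),
    fin_presented F /\
    (forall x y, a x = a y -> x = y) /\
    (forall z, h z = 0 <-> exists x, a x = z) /\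
    (forall z, P (h z)) /\
    (forall y, P y -> (b y = 0 <-> exists z, h z = y)) /\
    (forall t, exists y, P y /\ b y = t) /\
    (forall t : T1, s *: t = 0) /\ (forall t : T2, s *: t = 0).

Definition u_S_coherent (S : R -> Prop) (M : lmodType R) :=
  exists s, S s /\ S_finite_wrt s M /\
    forall P : M -> Prop, fg_submodule P -> u_S_fp_sub_wrt s P.

Definition is_direct_sum (n : nat) (Ms : 'I_n -> lmodType R) (D : lmodType R)
  (inj : forall i, {linear Ms i -> D}) (proj : forall i, {linear D -> Ms i}) :=
  (forall i (x : Ms i), proj i (inj i x) = x) /\
  (forall i j (x : Ms i), i != j -> proj j (inj i x) = 0) /\
  (forall y : D, \sum_(i < n) inj i (proj i y) = y).

End UsDefs.

(* u-S-coherence of M is equivalent to an elementary condition on some s in S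
   ([coherent_wrt s M]): s M lies in a finitely generated submodule and, for every
   finite family l of elements of M, s Syz(l) lies in the span of finitely many
   syzygies of l.  A u-S-finite presentation of the span of l yields such syzygies (at the
   price of s^2), and conversely R^k modulo finitely many syzygies of l, mapped onto
   the span of l, is a u-S-finite presentation of it.  In elementary form the four
   statements are diagram chases in which generators and syzygies are lifted along
   f and g, each lift costing a factor in S witnessing u-S-exactness; a
   u-S-isomorphism is the u-S-exact sequence 0 -> A -> B -> 0 -> 0, and for a finite
   direct sum the syzygy module of l is the intersection of those of its components. *)

From HB Require Import structures.
From mathcomp Require Import all_boot all_order all_algebra.
From Stdlib Require Import ClassicalEpsilon FunctionalExtensionality PropExtensionality.
Set Implicit Arguments. Unset Strict Implicit. Unset Printing Implicit Defensive.
Import GRing.Theory.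
Local Open Scope ring_scope.

Section Kernel.
Variables (R : comPzRingType) (U V : lmodType R) (h : {linear U -> V}).

Definition in_ker : {pred U} := fun x => h x == 0.

Lemma in_ker_submod_closed : submod_closed in_ker.
Proof.
split=> [|a x y]; rewrite /in_mem /= /in_ker ?linear0 //.
by move=> /eqP hx /eqP hy; rewrite linearP hx hy scaler0 addr0.
Qed.
HB.instance Definition _ := GRing.isSubmodClosed.Build R U in_ker in_ker_submod_closed.

Inductive kernel : predArgType := Ker x of x \in in_ker.
Definition ker_val (x : kernel) : U := let: Ker u _ := x in u.
HB.instance Definition _ := [isSub of kernel for ker_val].
HB.instance Definition _ := [Choice of kernel by <:].
HB.instance Definition _ := [SubChoice_isSubZmodule of kernel by <:].
HB.instance Definition _ := [SubZmodule_isSubLmodule of kernel by <:].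
Lemma ker_val_is_linear : linear ker_val.
Proof. by []. Qed.
HB.instance Definition _ := GRing.isLinear.Build R kernel U _ ker_val ker_val_is_linear.
End Kernel.

Section Cokernel.
Variables (R : comPzRingType) (W V : lmodType R) (phi : {linear W -> V}).

Definition in_range (x : V) := exists w, phi w = x.

Lemma in_range0 : in_range 0.
Proof. by exists 0; rewrite linear0. Qed.

Lemma in_rangeD x y : in_range x -> in_range y -> in_range (x + y).
Proof. by move=> [v <-] [w <-]; exists (v + w); rewrite linearD. Qed.

Lemma in_rangeZ a x : in_range x -> in_range (a *: x).
Proof. by move=> [v <-]; exists (a *: v); rewrite (linearZ_LR phi). Qed.

Lemma in_rangeB x y : in_range x -> in_range y -> in_range (x - y).
Proof. by move=> Rx Ry; rewrite -scaleN1r; apply/in_rangeD/in_rangeZ. Qed.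

(* Hilbert's epsilon picks a representative that depends only on the coset itself,
   so congruent vectors get equal representatives. *)
Definition coset (x : V) := fun y => in_range (y - x).
Definition coset_repr (x : V) : V := epsilon (inhabits 0) (coset x).

Lemma coset_reprP x : in_range (coset_repr x - x).
Proof. by apply: (epsilon_spec _ (coset x)); exists x; rewrite /coset subrr; apply: in_range0. Qed.

Lemma coset_repr_eq x y : in_range (x - y) -> coset_repr x = coset_repr y.
Proof.
move=> Rxy; rewrite /coset_repr; congr epsilon.
apply: functional_extensionality => z; apply: propositional_extensionality.
rewrite /coset; split=> Rz.
  by have := in_rangeD Rz Rxy; rewrite addrA subrK.
by have := in_rangeB Rz Rxy; rewrite opprB addrA subrK.
Qed.

Lemma coset_reprK x : coset_repr (coset_repr x) = coset_repr x.
Proof. exact/coset_repr_eq/coset_reprP. Qed.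

Inductive coker : predArgType := Coker x of coset_repr x == x.
Definition coker_val (q : coker) : V := let: Coker x _ := q in x.
HB.instance Definition _ := [isSub of coker for coker_val].
HB.instance Definition _ := [Choice of coker by <:].

Definition coker_pi (x : V) : coker := Coker (introT eqP (coset_reprK x)).

Lemma coker_piK q : coker_pi (val q) = q.
Proof. by apply: val_inj; case: q => x /= /eqP. Qed.

Lemma cokerW (P : coker -> Prop) : (forall x, P (coker_pi x)) -> forall q, P q.
Proof. by move=> Ppi q; rewrite -(coker_piK q). Qed.

Lemma coker_piP x y : coker_pi x = coker_pi y <-> in_range (x - y).
Proof.
split=> [/(congr1 val) /= exy|]; last by move=> Rxy; apply: val_inj; apply: coset_repr_eq.
have := in_rangeB (coset_reprP y) (coset_reprP x).
by rewrite exy opprB addrC addrA subrK.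
Qed.

Definition coker_add (p q : coker) := coker_pi (val p + val q).
Definition coker_opp (q : coker) := coker_pi (- val q).
Definition coker_scale (a : R) (q : coker) := coker_pi (a *: val q).

Lemma coker_addE x y : coker_add (coker_pi x) (coker_pi y) = coker_pi (x + y).
Proof. by apply/coker_piP; rewrite /= opprD addrACA; apply: in_rangeD; apply: coset_reprP. Qed.

Lemma coker_oppE x : coker_opp (coker_pi x) = coker_pi (- x).
Proof.
apply/coker_piP; rewrite /= opprK addrC.
by have := in_rangeZ (-1) (coset_reprP x); rewrite scaleN1r opprB.
Qed.

Lemma coker_scaleE a x : coker_scale a (coker_pi x) = coker_pi (a *: x).
Proof. by apply/coker_piP; rewrite /= -scalerBr; apply/in_rangeZ/coset_reprP. Qed.

Lemma coker_addA : associative coker_add.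
Proof. by elim/cokerW=> x; elim/cokerW=> y; elim/cokerW=> z; rewrite !coker_addE addrA. Qed.
Lemma coker_addC : commutative coker_add.
Proof. by elim/cokerW=> x; elim/cokerW=> y; rewrite !coker_addE addrC. Qed.
Lemma coker_add0 : left_id (coker_pi 0) coker_add.
Proof. by elim/cokerW=> x; rewrite coker_addE add0r. Qed.
Lemma coker_addN : left_inverse (coker_pi 0) coker_opp coker_add.
Proof. by elim/cokerW=> x; rewrite coker_oppE coker_addE addNr. Qed.
HB.instance Definition _ := GRing.isZmodule.Build coker coker_addA coker_addC coker_add0 coker_addN.

Lemma coker_piD x y : coker_pi x + coker_pi y = coker_pi (x + y).
Proof. exact: coker_addE. Qed.

Lemma coker_scaleA a b q : coker_scale a (coker_scale b q) = coker_scale (a * b) q.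
Proof. by elim/cokerW: q => x; rewrite !coker_scaleE scalerA. Qed.
Lemma coker_scale1 : left_id 1 coker_scale.
Proof. by elim/cokerW=> x; rewrite coker_scaleE scale1r. Qed.
Lemma coker_scaleDr : right_distributive coker_scale +%R.
Proof.
move=> a; elim/cokerW=> x; elim/cokerW=> y.
by rewrite coker_piD !coker_scaleE coker_piD scalerDr.
Qed.
Lemma coker_scaleDl q : {morph coker_scale^~ q : a b / a + b}.
Proof. by elim/cokerW: q => x a b; rewrite !coker_scaleE coker_piD scalerDl. Qed.
HB.instance Definition _ :=
  GRing.Zmodule_isLmodule.Build R coker coker_scaleA coker_scale1 coker_scaleDr coker_scaleDl.

Lemma coker_pi_is_linear : linear coker_pi.
Proof. by move=> a x y; rewrite -coker_piD -coker_scaleE. Qed.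
HB.instance Definition _ := GRing.isLinear.Build R V coker _ coker_pi coker_pi_is_linear.

Lemma coker_pi_eq0 x : coker_pi x = 0 <-> in_range x.
Proof. by rewrite -(linear0 coker_pi) coker_piP subr0. Qed.

Section Lift.
Variables (X : lmodType R) (psi : {linear V -> X}).
Hypothesis psi_phi : forall w, psi (phi w) = 0.

(* The hypothesis is an argument so that the linear instance below can be keyed on it. *)
Definition coker_lift of (forall w, psi (phi w) = 0) := fun q : coker => psi (val q).

Lemma coker_liftE x : coker_lift psi_phi (coker_pi x) = psi x.
Proof.
apply/eqP; rewrite -subr_eq0 -linearB /=.
by have [w <-] := coset_reprP x; rewrite psi_phi.
Qed.

Lemma coker_lift_is_linear : linear (coker_lift psi_phi).
Proof.
move=> a; elim/cokerW=> x; elim/cokerW=> y.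
by rewrite -linearP !coker_liftE linearP.
Qed.
HB.instance Definition _ :=
  GRing.isLinear.Build R coker X _ (coker_lift psi_phi) coker_lift_is_linear.
End Lift.

End Cokernel.

Section LinearCombination.
Variables (R : comPzRingType) (M : lmodType R).

Definition lcomb k (l : 'I_k -> M) (c : 'rV[R]_k) : M := \sum_i c 0 i *: l i.

Lemma lcomb_is_linear k (l : 'I_k -> M) : linear (lcomb l).
Proof.
move=> a c d; rewrite /lcomb scaler_sumr -big_split; apply: eq_bigr => i _ /=.
by rewrite !mxE scalerDl scalerA.
Qed.
HB.instance Definition _ k l :=
  GRing.isLinear.Build R 'rV[R]_k M _ (@lcomb k l) (lcomb_is_linear l).

Lemma lcombZr k (l : 'I_k -> M) a c : lcomb l (a *: c) = a *: lcomb l c.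
Proof. exact: linearZ_LR. Qed.

Definition lspan k (l : 'I_k -> M) (x : M) := exists c, lcomb l c = x.

Lemma eq_lcomb k (l l' : 'I_k -> M) : l =1 l' -> lcomb l =1 lcomb l'.
Proof. by move=> e c; apply: eq_bigr => i _; rewrite e. Qed.

Lemma eq_lspan k (l l' : 'I_k -> M) x : l =1 l' -> lspan l x -> lspan l' x.
Proof. by move=> e [c <-]; exists c; rewrite (eq_lcomb e). Qed.

Lemma lcomb_delta k (l : 'I_k -> M) i : lcomb l (delta_mx 0 i) = l i.
Proof.
rewrite /lcomb (bigD1 i) //= mxE !eqxx scale1r big1 ?addr0 // => j ne_ji.
by rewrite mxE (negPf ne_ji) andbF scale0r.
Qed.

Lemma lcombZl k a (l : 'I_k -> M) c : lcomb (fun i => a *: l i) c = a *: lcomb l c.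
Proof. by rewrite /lcomb scaler_sumr; apply: eq_bigr => i _; rewrite !scalerA mulrC. Qed.

Lemma lcombBl k (l l' : 'I_k -> M) c :
  lcomb (fun i => l i - l' i) c = lcomb l c - lcomb l' c.
Proof. by rewrite /lcomb -sumrB; apply: eq_bigr => i _; rewrite scalerBr. Qed.

Lemma lspan0 k (l : 'I_k -> M) : lspan l 0.
Proof. by exists 0; rewrite linear0. Qed.

Lemma lspan_gen k (l : 'I_k -> M) i : lspan l (l i).
Proof. by exists (delta_mx 0 i); rewrite lcomb_delta. Qed.

Lemma lspanZ k (l : 'I_k -> M) a x : lspan l x -> lspan l (a *: x).
Proof. by move=> [c <-]; exists (a *: c); rewrite lcombZr. Qed.

Definition catI T m n (a : 'I_m -> T) (b : 'I_n -> T) (i : 'I_(m + n)) : T :=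
  match split i with inl j => a j | inr j => b j end.

Lemma catI_ind T (P : T -> Prop) m n (a : 'I_m -> T) (b : 'I_n -> T) :
  (forall j, P (a j)) -> (forall j, P (b j)) -> forall i, P (catI a b i).
Proof. by move=> Pa Pb i; rewrite /catI; case: split. Qed.

Lemma lcomb_cat m n (a : 'I_m -> M) (b : 'I_n -> M) c d :
  lcomb (catI a b) (row_mx c d) = lcomb a c + lcomb b d.
Proof.
rewrite /lcomb big_split_ord; congr (_ + _); apply: eq_bigr => i _.
  by rewrite row_mxEl /catI (unsplitK (inl _)).
by rewrite row_mxEr /catI (unsplitK (inr _)).
Qed.

Lemma lspan_cat m n (a : 'I_m -> M) (b : 'I_n -> M) x y :
  lspan a x -> lspan b y -> lspan (catI a b) (x + y).
Proof. by move=> [c <-] [d <-]; exists (row_mx c d); rewrite lcomb_cat. Qed.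

End LinearCombination.

Lemma linear_lcomb (R : comPzRingType) (M N : lmodType R) (f : {linear M -> N}) k
  (l : 'I_k -> M) c : f (lcomb l c) = lcomb (f \o l) c.
Proof. by rewrite linear_sum; apply: eq_bigr => i _; rewrite linearZ. Qed.

Lemma lspan_map (R : comPzRingType) (M N : lmodType R) (f : {linear M -> N}) k
  (l : 'I_k -> M) x : lspan l x -> lspan (f \o l) (f x).
Proof. by move=> [c <-]; exists c; rewrite linear_lcomb. Qed.

Lemma lcomb_delta_mx (R : comPzRingType) k (c : 'rV[R]_k) : lcomb (delta_mx 0) c = c.
Proof. by rewrite [RHS]row_sum_delta. Qed.

Section SFinite.
Variable R : comPzRingType.

Definition sfinite (M : lmodType R) (s : R) (K : M -> Prop) :=
  exists k (l : 'I_k -> M), (forall i, K (l i)) /\ forall x, K x -> lspan l (s *: x).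

Definition syz (M : lmodType R) k (l : 'I_k -> M) (r : 'rV[R]_k) := lcomb l r = 0.

Definition coherent_wrt (s : R) (M : lmodType R) :=
  sfinite s (fun _ : M => True) /\ forall k (l : 'I_k -> M), sfinite s (syz l).

Implicit Types (M N : lmodType R) (s t : R).

Lemma eq_sfinite M s (K1 K2 : M -> Prop) :
  sfinite s K1 -> (forall x, K1 x <-> K2 x) -> sfinite s K2.
Proof.
move=> [k [l [Kl sK]]] eK; exists k, l.
by split=> [i|x /eK]; [apply/eK|apply: sK].
Qed.

Lemma sfiniteMl M u s (K : M -> Prop) : sfinite s K -> sfinite (u * s) K.
Proof.
by move=> [k [l [Kl sK]]]; exists k, l; split=> // x /sK /(lspanZ u); rewrite scalerA.
Qed.

Lemma sfinite_transfer M s s' t (K1 K2 : M -> Prop) :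
  (forall x, K2 x -> K1 (s *: x)) -> (forall x, K1 x -> K2 (s' *: x)) ->
  sfinite t K1 -> sfinite (s' * t * s) K2.
Proof.
move=> K21 K12 [k [l [Kl sK]]]; exists k, (fun i => s' *: l i); split=> [i|x K2x].
  exact/K12/Kl.
have [c lc] := sK _ (K21 _ K2x); exists c.
by rewrite lcombZl lc !scalerA mulrA.
Qed.

Lemma sfinite_image M N (h : {linear M -> N}) s t :
  (forall y, exists x, h x = s *: y) ->
  sfinite t (fun _ : M => True) -> sfinite (t * s) (fun _ : N => True).
Proof.
move=> h_surj [k [l [_ sM]]]; exists k, (h \o l); split=> // y _.
have [x hx] := h_surj y; have := lspan_map h (sM x I).
by rewrite (linearZ_LR h) hx scalerA.
Qed.

Lemma sfinite_rV k : sfinite 1 (fun _ : 'rV[R]_k => True).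
Proof. by exists k, (delta_mx 0); split=> // r _; exists r; rewrite scale1r lcomb_delta_mx. Qed.

Lemma syz_lcomb M k (l : 'I_k -> M) m (G : 'I_m -> 'rV_k) c :
  (forall j, syz l (G j)) -> syz l (lcomb G c).
Proof.
by move=> lG; rewrite /syz linear_lcomb /lcomb big1 // => j _; rewrite /= lG scaler0.
Qed.

Section Meet.
Variables (M : lmodType R) (k : nat) (l : 'I_k -> M) (K : 'rV[R]_k -> Prop) (a b : R).
Hypothesis K_lcomb : forall m (G : 'I_m -> 'rV_k) c, (forall j, K (G j)) -> K (lcomb G c).
Hypothesis sfinite_syz_K :
  forall m (G : 'I_m -> 'rV_k), (forall j, K (G j)) -> sfinite b (syz (lcomb l \o G)).

Lemma sfinite_meet_syz : sfinite a K -> sfinite (b * a) (fun r => K r /\ syz l r).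
Proof.
move=> [m [G [KG aK]]]; have [n [H [syzH bsyz]]] := sfinite_syz_K KG.
exists n, (lcomb G \o H); split=> [j|r [Kr lr]].
  by split; [apply: K_lcomb | rewrite /syz /= linear_lcomb; apply: syzH].
have [c Gc] := aK _ Kr.
have /bsyz [d Hd] : syz (lcomb l \o G) c.
  by rewrite /syz -linear_lcomb /= Gc lcombZr lr scaler0.
by exists d; rewrite -linear_lcomb /= Hd lcombZr Gc scalerA.
Qed.
End Meet.

Lemma coherent_wrt_of M s t :
  sfinite s (fun _ : M => True) -> (forall k (l : 'I_k -> M), sfinite t (syz l)) ->
  coherent_wrt (s * t) M.
Proof. by move=> sM tsyz; split=> [|k l]; [rewrite mulrC|]; apply: sfiniteMl. Qed.

End SFinite.

Section ShortExact.
Variables (R : comPzRingType) (M N L : lmodType R).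
Variables (f : {linear M -> N}) (g : {linear N -> L}) (s1 s2 s3 : R).
Hypothesis f_inj : forall x, f x = 0 -> s1 *: x = 0.
Hypothesis ker_g_sub : forall y, g y = 0 -> exists x, f x = s2 *: y.
Hypothesis im_f_sub : forall x, g (s2 *: f x) = 0.
Hypothesis g_surj : forall z, exists y, g y = s3 *: z.

Lemma sfinite_syz_ker t k (z : 'I_k -> N) :
  (forall i, g (z i) = 0) -> (forall m (x : 'I_m -> M), sfinite t (syz x)) ->
  sfinite (s2 * t * s1) (syz z).
Proof.
move=> gz tsyz; have [x fx] := fin_all_exists (fun i => ker_g_sub (gz i)).
apply: sfinite_transfer (tsyz _ x) => r; rewrite /syz => lr.
  by rewrite lcombZr; apply: f_inj; rewrite linear_lcomb (eq_lcomb fx) lcombZl lr scaler0.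
by rewrite lcombZr -lcombZl -(eq_lcomb fx) -linear_lcomb lr linear0.
Qed.

Lemma sfinite_extension tM tL :
  sfinite tM (fun _ : M => True) -> sfinite tL (fun _ : L => True) ->
  sfinite (tM * s2 * (s3 * tL)) (fun _ : N => True).
Proof.
move=> [m [GM [_ sM]]] [n [GL [_ sL]]].
have [Y gY] := fin_all_exists (fun j => g_surj (GL j)).
exists (m + n)%N, (catI (f \o GM) Y); split=> // y _.
have [c Yc] := sL (g y) I.
have /ker_g_sub [x fx] : g ((s3 * tL) *: y - lcomb Y c) = 0.
  by rewrite linearB linear_lcomb (eq_lcomb gY) lcombZl Yc (linearZ_LR g) scalerA subrr.
have [d GMd] := sM x I; exists (row_mx d ((tM * s2) *: c)).
rewrite lcomb_cat -linear_lcomb GMd lcombZr (linearZ_LR f) fx.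
by rewrite scalerA -scalerDr subrK scalerA.
Qed.

Lemma coherent_wrt_extension tM tL : coherent_wrt tM M -> coherent_wrt tL L ->
  coherent_wrt (tM * s2 * (s3 * tL) * (s2 * tM * s1 * tL)) N.
Proof.
move=> [sM syzM] [sL syzL]; apply: coherent_wrt_of; first exact: sfinite_extension.
move=> k l.
have syz_ker m (G : 'I_m -> 'rV_k) : (forall j, syz (g \o l) (G j)) ->
    sfinite (s2 * tM * s1) (syz (lcomb l \o G)).
  by move=> syzG; apply: sfinite_syz_ker => // j; rewrite /= linear_lcomb; apply: syzG.
apply: eq_sfinite (sfinite_meet_syz (@syz_lcomb _ _ _ _) syz_ker (syzL _ _)) _ => r.
by split=> [[]|lr] //; split=> //; rewrite /syz -linear_lcomb lr linear0.
Qed.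

Lemma sfinite_submodule tN tL :
  sfinite tN (fun _ : N => True) -> (forall k (l : 'I_k -> L), sfinite tL (syz l)) ->
  sfinite (s1 * (s2 * tL * s2 * tN)) (fun _ : M => True).
Proof.
move=> [m [GN [_ sN]]] syzL; have [n [H [syzH tLsyz]]] := syzL _ (g \o GN).
have gH j : g (lcomb GN (H j)) = 0 by rewrite linear_lcomb; apply: syzH.
have [X fX] := fin_all_exists (fun j => ker_g_sub (gH j)).
exists n, X; split=> // x _.
have [c GNc] := sN (f x) I.
have /tLsyz [d Hd] : syz (g \o GN) (s2 *: c).
  rewrite /syz lcombZr -linear_lcomb /= GNc (linearZ_LR g) scalerA [s2 * _]mulrC.
  by rewrite -scalerA -(linearZ_LR g) im_f_sub scaler0.
exists (s1 *: d); rewrite lcombZr; apply/eqP; rewrite -subr_eq0 -!scalerA -scalerBr.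
apply/eqP/f_inj; rewrite linearB (linearZ_LR f) linear_lcomb (eq_lcomb fX) lcombZl.
by rewrite -linear_lcomb /= Hd !lcombZr GNc !(linearZ_LR f) subrr.
Qed.

Lemma coherent_wrt_submodule tN tL : coherent_wrt tN N -> coherent_wrt tL L ->
  coherent_wrt (s1 * (s2 * tL * s2 * tN) * (s1 * tN * 1)) M.
Proof.
move=> [sN syzN] [_ syzL]; apply: coherent_wrt_of; first exact: sfinite_submodule.
move=> k l; apply: sfinite_transfer (syzN _ (f \o l)) => r; rewrite /syz => lr.
  by rewrite scale1r -linear_lcomb lr linear0.
by rewrite lcombZr; apply: f_inj; rewrite linear_lcomb.
Qed.

Lemma coherent_wrt_quotient tN u : coherent_wrt tN N -> sfinite u (fun _ : M => True) ->
  coherent_wrt (tN * s3 * (s2 * s3 * (tN * (u * s2)))) L.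
Proof.
move=> [sN syzN] [p [GM [_ sM]]]; apply: coherent_wrt_of.
  exact: sfinite_image g_surj sN.
move=> k l; have [Y gY] := fin_all_exists (fun i => g_surj (l i)).
have [n [H [syzH tNsyz]]] := syzN _ (catI Y (f \o GM)).
exists n, (fun j => (s2 * s3) *: lsubmx (H j)); split=> [j|r lr].
  have eY : lcomb Y (lsubmx (H j)) = - lcomb (f \o GM) (rsubmx (H j)).
    by apply/eqP; rewrite -addr_eq0 -lcomb_cat hsubmxK; apply/eqP/syzH.
  rewrite /syz lcombZr -scalerA -lcombZl -(eq_lcomb gY) -linear_lcomb /= eY.
  by rewrite -linear_lcomb /= (linearN g) scalerN -(linearZ_LR g) im_f_sub oppr0.
have /ker_g_sub [x fx] : g (lcomb Y r) = 0.
  by rewrite linear_lcomb (eq_lcomb gY) lcombZl lr scaler0.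
have [e GMe] := sM x I.
have /tNsyz [c Hc] : syz (catI Y (f \o GM)) (row_mx ((u * s2) *: r) (- e)).
  rewrite /syz lcomb_cat (linearN (lcomb (f \o GM))) /= -linear_lcomb /= GMe lcombZr.
  by rewrite (linearZ_LR f) fx scalerA subrr.
exists c; rewrite lcombZl -linear_lcomb /= Hc scale_row_mx row_mxKl.
by rewrite !scalerA mulrA.
Qed.

End ShortExact.

Lemma lspan_big (R : comPzRingType) (M : lmodType R) (I : Type) (r : seq I)
    (F : I -> M -> Prop) :
  (forall i, exists m (l : 'I_m -> M), forall x, F i x -> lspan l x) ->
  exists m (l : 'I_m -> M), forall xs : I -> M, (forall i, F i (xs i)) ->
    lspan l (\sum_(i <- r) xs i).
Proof.
move=> finF; elim: r => [|i r [m [l IHr]]].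
  by exists 0%N, (fun _ => 0) => xs _; rewrite big_nil; apply: lspan0.
have [m' [l' Fl']] := finF i; exists (m' + m)%N, (catI l' l) => xs Fxs.
by rewrite big_cons; apply: lspan_cat; [apply: Fl' | apply: IHr].
Qed.

Section DirectSum.
Variables (R : comPzRingType) (n : nat) (Ms : 'I_n -> lmodType R) (D : lmodType R).
Variables (inj : forall i, {linear Ms i -> D}) (proj : forall i, {linear D -> Ms i}).
Hypothesis sum_inj_proj : forall y, \sum_i inj i (proj i y) = y.
Variable t : 'I_n -> R.

Lemma sfinite_direct_sum :
  (forall i, sfinite (t i) (fun _ : Ms i => True)) ->
  sfinite (\prod_i t i) (fun _ : D => True).
Proof.
move=> sMs.
pose F i x := exists z : Ms i, x = inj i (t i *: z).
have finF i : exists m (l : 'I_m -> D), forall x, F i x -> lspan l x.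
  have [m [G [_ sG]]] := sMs i; exists m, (inj i \o G) => _ [z ->].
  exact/lspan_map/sG.
have [m [G sG]] := lspan_big (index_enum 'I_n) finF.
exists m, G; split=> // y _.
have Fi i : F i (inj i ((\prod_j t j) *: proj i y)).
  by exists ((\prod_(j | j != i) t j) *: proj i y); rewrite scalerA [in LHS](bigD1 i).
suff -> : (\prod_j t j) *: y = \sum_i inj i ((\prod_j t j) *: proj i y) by apply: sG.
rewrite -{1}[y]sum_inj_proj scaler_sumr.
by apply: eq_bigr => i _; rewrite (linearZ_LR (inj i)).
Qed.

Lemma sfinite_syz_direct_sum k (l : 'I_k -> D) :
  (forall i m (x : 'I_m -> Ms i), sfinite (t i) (syz x)) ->
  sfinite (\prod_i t i) (syz l).
Proof.
move=> syzMs.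
have meet (r : seq 'I_n) : sfinite (\prod_(i <- r) t i)
    (fun v => forall i, i \in r -> syz (proj i \o l) v).
  elim: r => [|i r IHr]; first by rewrite big_nil; apply: eq_sfinite (@sfinite_rV R k) _.
  have K_lcomb m (G : 'I_m -> 'rV_k) c :
      (forall h j, j \in r -> syz (proj j \o l) (G h)) ->
      forall j, j \in r -> syz (proj j \o l) (lcomb G c).
    by move=> KG j jr; apply: syz_lcomb => h; apply: KG.
  have := sfinite_meet_syz (l := proj i \o l) K_lcomb (fun m G _ => syzMs i _ _) IHr.
  rewrite big_cons => /eq_sfinite; apply=> v.
  split=> [[Kv iv] j|Kv]; first by rewrite in_cons => /orP [/eqP -> //|]; apply: Kv.
  by split=> [j jr|]; apply: Kv; rewrite in_cons ?jr ?orbT ?eqxx.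
move: (meet (index_enum 'I_n)) => /eq_sfinite; apply=> v; split=> [syzv|syzv i _].
  rewrite /syz -[lcomb l v]sum_inj_proj big1 // => i _.
  by rewrite linear_lcomb syzv ?mem_index_enum // linear0.
by rewrite /syz -linear_lcomb syzv linear0.
Qed.

Lemma coherent_wrt_direct_sum :
  (forall i, coherent_wrt (t i) (Ms i)) -> coherent_wrt (\prod_i t i) D.
Proof.
move=> cohMs; split=> [|k l].
  by apply: sfinite_direct_sum => i; have [] := cohMs i.
by apply: sfinite_syz_direct_sum => i; have [] := cohMs i.
Qed.

End DirectSum.

Section Presentations.
Variables (R : comPzRingType) (M : lmodType R).

Lemma generated_byP (L : seq M) x :
  generated_by L x <-> lspan (fun i : 'I_(size L) => L`_i) x.
Proof.
split=> [[c ->]|[c <-]]; last by exists (fun i => c 0 i).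
by exists (\row_i c i); apply: eq_bigr => i _; rewrite mxE.
Qed.

Lemma lspan_cast k k' (e : k = k') (l : 'I_k' -> M) x :
  lspan (l \o cast_ord e) x <-> lspan l x.
Proof. by case: k' / e in l *; split; apply: eq_lspan => i /=; rewrite cast_ord_id. Qed.

Lemma fg_submoduleP (P : M -> Prop) :
  fg_submodule P <-> exists k (l : 'I_k -> M), forall x, P x <-> lspan l x.
Proof.
split=> [[L PL]|[k [l Pl]]].
  by exists (size L), (fun i => L`_i) => x; rewrite PL generated_byP.
pose t := [tuple l i | i < k].
have tE (i : 'I_(size t)) : t`_i = l (cast_ord (size_tuple t) i).
  by rewrite -[LHS]/(nth 0 t (cast_ord (size_tuple t) i)) -tnth_nth tnth_mktuple.
exists t => x; rewrite Pl generated_byP -(lspan_cast (size_tuple t)).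
by split; apply: eq_lspan => i; rewrite tE.
Qed.

Lemma S_finite_wrtP s : S_finite_wrt s M <-> sfinite s (fun _ : M => True).
Proof.
split=> [[F [/fg_submoduleP [k [l Fl]] sF]]|[k [l [_ sl]]]].
  by exists k, l; split=> // x _; apply/Fl.
exists (lspan l); split=> [|x]; last exact: sl.
by apply/fg_submoduleP; exists k, l.
Qed.

End Presentations.

Section FromSyzygies.
Variables (R : comPzRingType) (M : lmodType R) (s : R).
Variables (k m : nat) (l : 'I_k -> M) (G : 'I_m -> 'rV[R]_k).
Hypothesis syzG : forall j, syz l (G j).
Hypothesis sG : forall r, syz l r -> lspan G (s *: r).

Let lcomb_G w : lcomb l (lcomb G w) = 0.
Proof. exact: syz_lcomb. Qed.

Let F := coker (lcomb G).
Let pi : {linear 'rV_k -> F} := coker_pi (lcomb G).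
Let h : {linear F -> M} := coker_lift lcomb_G.

Lemma coker_fin_presented : fin_presented F.
Proof.
exists k, pi; split=> [q|]; first by exists (val q); apply: coker_piK.
apply/fg_submoduleP; exists m, G => r; rewrite /pi coker_pi_eq0.
by split=> [[w <-]|[w <-]]; exists w.
Qed.

(* The span of l is presented as R^k / span(G); s kills the kernel of that map. *)
Lemma u_S_fp_sub_of_syz (P : M -> Prop) :
  (forall x, P x <-> lspan l x) -> u_S_fp_sub_wrt s P.
Proof.
move=> Pl; have hpi v : h (pi v) = lcomb l v by apply: coker_liftE.
exists (kernel h), F, 'rV[R]_0, (@ker_val _ _ _ h), h, \0.
split; first exact: coker_fin_presented.
split; first exact: val_inj.
split=> [q|]; first by split=> [hq|[[x /= /eqP hx] <-] //]; exists (Ker (introT eqP hq)).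
split; first by elim/cokerW => v; apply/Pl; exists v; rewrite hpi.
split=> [y /Pl [c <-]|]; first by split=> // _; exists (pi c); rewrite hpi.
split=> [t|]; first by exists 0; split; [apply/Pl/lspan0 | rewrite (thinmx0 t)].
split=> [x|t]; last by rewrite (thinmx0 t) scaler0.
apply: val_inj; case: x => /= q /eqP; elim/cokerW: q => v; rewrite hpi => /sG [c Gc].
by rewrite -(linearZ_LR (coker_pi _)); apply/coker_pi_eq0; exists c.
Qed.

End FromSyzygies.

(* One factor s lifts each s l_i through h (as s T2 = 0), the other pushes a syzygy
   into the image of T1 and kills it there (as s T1 = 0). *)
Lemma sfinite_syz_of_u_S_fp (R : comPzRingType) (M : lmodType R) (s : R) k
    (l : 'I_k -> M) (P : M -> Prop) :
  (forall x, P x <-> lspan l x) -> u_S_fp_sub_wrt s P -> sfinite (s * s) (syz l).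
Proof.
move=> Pl [T1 [F [T2 [a [h [b [[n [pi [pi_surj /fg_submoduleP [p [K Kpi]]]]]
  [_ [exactF [Ph [exactP [_ [sT1 sT2]]]]]]]]]]]]].
have [C hC] := fin_all_exists (fun j => (Pl _).1 (Ph (pi (delta_mx 0 j)))).
have hpiC u : h (pi u) = lcomb l (lcomb C u).
  rewrite -[u in LHS]lcomb_delta_mx !linear_lcomb.
  by apply: eq_lcomb => j; rewrite /= hC.
have lift_sl i : exists d, h (pi d) = s *: l i.
  have Psl : P (s *: l i) by apply/Pl/lspanZ/lspan_gen.
  have [z <-] : exists z, h z = s *: l i.
    by apply/(exactP _ Psl); rewrite (linearZ_LR b) sT2.
  by have [d <-] := pi_surj z; exists d.
have [D hD] := fin_all_exists lift_sl.
exists (p + k)%N, (catI (lcomb C \o K) (fun i => lcomb C (D i) - s *: delta_mx 0 i)).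
split=> [|r lr].
  apply: catI_ind => [t|i]; rewrite /syz /=.
    by rewrite -hpiC (Kpi _).2 ?linear0 //; apply: lspan_gen.
  by rewrite linearB /= lcombZr lcomb_delta -hpiC hD subrr.
have hpiD : h (pi (lcomb D r)) = 0.
  by rewrite !linear_lcomb (eq_lcomb hD) lcombZl lr scaler0.
have [x ax] := (exactF _).1 hpiD.
have /Kpi [w Kw] : pi (s *: lcomb D r) = 0.
  by rewrite (linearZ_LR pi) -ax -(linearZ_LR a) sT1 linear0.
exists (row_mx w (- (s *: r))).
rewrite lcomb_cat lcombBl lcombZl lcomb_delta_mx -!linear_lcomb /= Kw.
rewrite (linearN (lcomb D)) /= (linearN (lcomb C)) /= addrA.
by rewrite !lcombZr subrr sub0r scalerN opprK scalerA.
Qed.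

Lemma coherent_wrt_rV0 (R : comPzRingType) : coherent_wrt 1 'rV[R]_0.
Proof.
split=> [|k l]; first exact: sfinite_rV.
apply: eq_sfinite (sfinite_rV _ k) _ => r.
by split=> // _; rewrite /syz (thinmx0 (lcomb l r)).
Qed.

Lemma u_S_coherentP (R : comPzRingType) (S : R -> Prop) (M : lmodType R) :
  mult_subset S -> u_S_coherent S M <-> exists2 s, S s & coherent_wrt s M.
Proof.
move=> [_ mulS]; split=> [[s [Ss [sM fpM]]]|[s Ss [sM syzM]]].
  exists (s * s); first exact: mulS.
  split=> [|k l]; first exact/sfiniteMl/S_finite_wrtP.
  apply: (sfinite_syz_of_u_S_fp (P := lspan l)) => //.
  by apply/fpM/fg_submoduleP; exists k, l.
exists s; split=> //; split=> [|P /fg_submoduleP [k [l Pl]]]; first exact/S_finite_wrtP.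
have [m [G [syzG sG]]] := syzM k l.
exact: u_S_fp_sub_of_syz syzG sG P Pl.
Qed.

Theorem theorem3p2 (R : comPzRingType) (S : R -> Prop) (M N L : lmodType R)
  (f : {linear M -> N}) (g : {linear N -> L}) :
  mult_subset S -> u_S_exact_short S f g ->
  [/\ (forall (A B : lmodType R) (h : {linear A -> B}),
          u_S_iso S h -> u_S_coherent S A -> u_S_coherent S B),
      (u_S_coherent S L -> (u_S_coherent S M <-> u_S_coherent S N)),
      (forall (n : nat) (Ms : 'I_n -> lmodType R) (D : lmodType R)
              (inj : forall i, {linear Ms i -> D})
              (proj : forall i, {linear D -> Ms i}),
          is_direct_sum inj proj ->
          (forall i, u_S_coherent S (Ms i)) -> u_S_coherent S D) &
      (u_S_coherent S N -> S_finite S M -> u_S_coherent S L)].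
Proof.
move=> HS [[s1 [Ss1 f_inj]] [[s2 [Ss2 [ker_g im_f]]] [s3 [Ss3 g_surj]]]].
have [S1 mulS] := HS; have cohP := u_S_coherentP _ HS.
have cohW (X : lmodType R) s : coherent_wrt s X -> S s -> u_S_coherent S X.
  by move=> cohX Ss; apply/cohP; exists s.
split.
- move=> A B h [s [Ss [h_inj h_surj]]] /cohP [t St cohA].
  (* h is the u-S-exact sequence 0 -> A -> B -> 0 -> 0. *)
  have ker0 (y : B) : \0 y = 0 :> 'rV[R]_0 -> exists x, h x = s *: y.
    by move=> _; apply: h_surj.
  have surj0 (z : 'rV[R]_0) : exists y : B, \0 y = 1 *: z.
    by exists 0; rewrite (thinmx0 z) scaler0.
  have := coherent_wrt_extension (g := \0) h_inj ker0 surj0 cohA (coherent_wrt_rV0 R).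
  by move/cohW; apply; repeat apply: (mulS).
- move=> /cohP [tL StL cohL]; split=> /cohP [t St coh].
    apply: cohW (coherent_wrt_extension f_inj ker_g g_surj coh cohL) _.
    by repeat apply: (mulS).
  apply: cohW (coherent_wrt_submodule f_inj ker_g im_f coh cohL) _.
  by repeat apply: (mulS).
- move=> n Ms D inj proj [_ [_ sum_inj_proj]] cohMs.
  have [t St cohMt] := fin_all_exists2 (fun i => (cohP _).1 (cohMs i)).
  by apply: cohW (coherent_wrt_direct_sum sum_inj_proj cohMt) _; apply: big_ind.
- move=> /cohP [t St cohN] [u [Su /S_finite_wrtP sM]].
  apply: cohW (coherent_wrt_quotient ker_g im_f g_surj cohN sM) _.
  by repeat apply: (mulS).
Qed.
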